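(* Let $B=(L,R,\omega,\lambda,\rho)$ be a bimachine defining a total function $f:\Sigma^\ast\to\Sigma^\ast$. Then $\sim_L\sqsubseteq\sim_{L_0}$ and $\sim_R\sqsubseteq\sim_{R_0}$.
   Context: A bimachine is $B=(L,R,\omega,\lambda,\rho)$ with $L$ a deterministic left automaton (initial state $l_0$), $R$ a deterministic right automaton reading right to left (initial state $r_0$), $\omega:L\times\Sigma\times R\to\Sigma^\ast$ partial, $\rho:L\to\Sigma^\ast$, $\lambda:R\to\Sigma^\ast$ partial. For $u=\sigma_1\cdots\sigma_n$ with runs $l_0\xrightarrow{\sigma_1}l_1\cdots\xrightarrow{\sigma_n}l_n$ and $r_n\xleftarrow{\sigma_1}r_{n-1}\cdots r_1\xleftarrow{\sigma_n}r_0$, $[\![B]\!](u)=\lambda(r_n)\prod_{i=1}^n\omega(l_{i-1},\sigma_i,r_{n-i})\,\rho(l_n)$ when everything is defined. For a deterministic left (resp. right) automaton $A$ with initial state $q_0$, $u\sim_A v$ iff for every state $p$, $A$ reaches $p$ from $q_0$ reading $u$ (resp. reading $u$ from right to left) iff it does so reading $v$. For equivalences, $\sim_1\sqsubseteq\sim_2$ means $u\sim_1v\Rightarrow u\sim_2 v$. Let $u\wedge v$ be the longest common prefix and $u\vee v$ the longest common suffix of $u,v$; left distance $\lVert u,v\rVert=|u|+|v|-2|u\wedge v|$, right distance $\lVert u,v\rVert_r=|u|+|v|-2|u\vee v|$. $u\sim_{R_0}v$ iff for all $w$, $wu\in\mathrm{dom}(f)\Leftrightarrow wv\in\mathrm{dom}(f)$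 and $\sup_w\lVert f(wu),f(wv)\rVert<\infty$ (over $w$ with $wu\in\mathrm{dom} f$). Symmetrically $u\sim_{L_0}v$ iff for all $w$, $uw\in\mathrm{dom}(f)\Leftrightarrow vw\in\mathrm{dom}(f)$ and $\sup_w\lVert f(uw),f(vw)\rVert_r<\infty$. *)

From mathcomp Require Import all_boot.
Set Implicit Arguments. Unset Strict Implicit. Unset Printing Implicit Defensive.

Record bimachine (S : finType) := Bimachine {
  LQ : finType;  l0 : LQ;  dL : LQ -> S -> option LQ;
  RQ : finType;  r0 : RQ;  dR : RQ -> S -> option RQ;
  omega : LQ -> S -> RQ -> option (seq S);
  rho : LQ -> seq S;
  lambda : RQ -> option (seq S)
}.
Arguments l0 {S} b.  Arguments dL {S} b.  Arguments r0 {S} b.  Arguments dR {S} b.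
Arguments omega {S} b.  Arguments rho {S} b.  Arguments lambda {S} b.

Definition lrun (Q S : Type) (d : Q -> S -> option Q) (q0 : Q) (u : seq S) : option Q :=
  foldl (fun oq a => obind (fun q => d q a) oq) (Some q0) u.

Definition rrun (Q S : Type) (d : Q -> S -> option Q) (q0 : Q) (u : seq S) : option Q :=
  foldr (fun a oq => obind (fun q => d q a) oq) (Some q0) u.

Definition optcat (S : Type) (a b : option (seq S)) : option (seq S) :=
  match a, b with Some x, Some y => Some (x ++ y) | _, _ => None end.

(* the i-th (0-based) output block: omega(l_i, sigma_{i+1}, r_{n-i-1}) *)
Definition block (S : finType) (B : bimachine S) (u : seq S) (i : nat) : option (seq S) :=
  match drop i u with
  | a :: rest =>
      match lrun (dL B) (l0 B) (take i u), rrun (dR B) (r0 B) rest with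
      | Some l, Some r => omega B l a r
      | _, _ => None
      end
  | [::] => None
  end.

(* [[B]](u) = lambda(r_n) * prod_i omega(l_{i-1},sigma_i,r_{n-i}) * rho(l_n) *)
Definition bsem (S : finType) (B : bimachine S) (u : seq S) : option (seq S) :=
  optcat (obind (lambda B) (rrun (dR B) (r0 B) u))
    (optcat (foldr (@optcat S) (Some [::]) [seq block B u i | i <- iota 0 (size u)])
            (omap (rho B) (lrun (dL B) (l0 B) u))).

Definition left_equiv (Q S : Type) (d : Q -> S -> option Q) (q0 : Q) (u v : seq S) : Prop :=
  forall p : Q, lrun d q0 u = Some p <-> lrun d q0 v = Some p.
Definition right_equiv (Q S : Type) (d : Q -> S -> option Q) (q0 : Q) (u v : seq S) : Prop :=
  forall p : Q, rrun d q0 u = Some p <-> rrun d q0 v = Some p.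

Definition refines (T : Type) (e1 e2 : T -> T -> Prop) : Prop :=
  forall u v, e1 u v -> e2 u v.

Fixpoint lcp_len (S : eqType) (u v : seq S) : nat :=
  match u, v with
  | a :: u', b :: v' => if a == b then (lcp_len u' v').+1 else 0
  | _, _ => 0
  end.
Definition lcs_len (S : eqType) (u v : seq S) : nat := lcp_len (rev u) (rev v).
Definition ldist (S : eqType) (u v : seq S) : nat := size u + size v - 2 * lcp_len u v.
Definition rdist (S : eqType) (u v : seq S) : nat := size u + size v - 2 * lcs_len u v.

(* f is a partial function Sigma* -> Sigma*, dom f = {w | f w <> None} *)
Definition R0_equiv (S : eqType) (f : seq S -> option (seq S)) (u v : seq S) : Prop :=
  (forall w, f (w ++ u) <> None <-> f (w ++ v) <> None) /\
  exists K : nat, forall w x y, f (w ++ u) = Some x -> f (w ++ v) = Some y -> ldist x y <= K.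

Definition L0_equiv (S : eqType) (f : seq S -> option (seq S)) (u v : seq S) : Prop :=
  (forall w, f (u ++ w) <> None <-> f (v ++ w) <> None) /\
  exists K : nat, forall w x y, f (u ++ w) = Some x -> f (v ++ w) = Some y -> rdist x y <= K.

(* Along a word z = x y, the output of B splits as P(x, y) C(x, y), where P consists of the
   initial lambda-block and the |x| blocks emitted while reading x, and C of the remaining
   blocks and the final rho-block.  The blocks emitted while reading y depend on x only through
   the left state reached after x, so x ~_L x' gives C(x, y) = C(x', y) for every y; the outputs
   on x y and x' y then share the suffix C and differ by at most |P(x, y)| + |P(x', y)|, which
   is bounded independently of y since every block has bounded length.  The right-hand
   statement is the mirror image. *)
From mathcomp Require Import all_boot zify.

Set Implicit Arguments.
Unset Strict Implicit.
Unset Printing Implicit Defensive.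

Lemma lrun_cat (Q T : Type) (d : Q -> T -> option Q) q0 u w :
  lrun d q0 (u ++ w) = foldl (fun oq a => obind (fun q => d q a) oq) (lrun d q0 u) w.
Proof. by rewrite /lrun foldl_cat. Qed.

Lemma rrun_cat (Q T : Type) (d : Q -> T -> option Q) q0 w u :
  rrun d q0 (w ++ u) = foldr (fun a oq => obind (fun q => d q a) oq) (rrun d q0 u) w.
Proof. by rewrite /rrun foldr_cat. Qed.

Lemma left_equiv_lrun (Q T : Type) (d : Q -> T -> option Q) q0 u v :
  left_equiv d q0 u v -> lrun d q0 u = lrun d q0 v.
Proof.
move=> Huv; case Eu: (lrun d q0 u) => [p|]; first by symmetry; apply/Huv.
by case Ev: (lrun d q0 v) => [p|] //; move/Huv: Ev; rewrite Eu.
Qed.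

Lemma right_equiv_rrun (Q T : Type) (d : Q -> T -> option Q) q0 u v :
  right_equiv d q0 u v -> rrun d q0 u = rrun d q0 v.
Proof.
move=> Huv; case Eu: (rrun d q0 u) => [p|]; first by symmetry; apply/Huv.
by case Ev: (rrun d q0 v) => [p|] //; move/Huv: Ev; rewrite Eu.
Qed.

Lemma optcatA (T : Type) (a b c : option (seq T)) :
  optcat a (optcat b c) = optcat (optcat a b) c.
Proof. by case: a => [a|]; case: b => [b|]; case: c => [c|] //=; rewrite catA. Qed.

Lemma optcat_Some (T : Type) (p q : option (seq T)) x : optcat p q = Some x ->
  exists a b, [/\ p = Some a, q = Some b & x = a ++ b].
Proof. by case: p => [a|]; case: q => [b|] //= [<-]; exists a, b. Qed.

Lemma optcat_common_suffix (T : Type) (p p' q : option (seq T)) x y :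
  optcat p q = Some x -> optcat p' q = Some y ->
  exists a a' c, [/\ p = Some a, p' = Some a', x = a ++ c & y = a' ++ c].
Proof.
move=> /optcat_Some[a [c [-> -> ->]]] /optcat_Some[a' [c' [-> [<-] ->]]].
by exists a, a', c.
Qed.

Lemma optcat_common_prefix (T : Type) (p q q' : option (seq T)) x y :
  optcat p q = Some x -> optcat p q' = Some y ->
  exists c b b', [/\ q = Some b, q' = Some b', x = c ++ b & y = c ++ b'].
Proof.
move=> /optcat_Some[c [b [-> -> ->]]] /optcat_Some[c' [b' [[<-] -> ->]]].
by exists c, b, b'.
Qed.

Lemma foldr_optcat_cat (T : Type) (s1 s2 : seq (option (seq T))) :
  foldr (@optcat T) (Some [::]) (s1 ++ s2) =
  optcat (foldr (@optcat T) (Some [::]) s1) (foldr (@optcat T) (Some [::]) s2).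
Proof.
elim: s1 => [|a s1 IH] /=; first by case: (foldr _ _ s2).
by rewrite IH optcatA.
Qed.

Lemma lcp_len_cat (T : eqType) (c a b : seq T) : size c <= lcp_len (c ++ a) (c ++ b).
Proof. by elim: c => [|x c IH] //=; rewrite eqxx. Qed.

Lemma ldist_catl (T : eqType) (c a b : seq T) : ldist (c ++ a) (c ++ b) <= size a + size b.
Proof. by rewrite /ldist !size_cat; have := lcp_len_cat c a b; lia. Qed.

Lemma rdist_catr (T : eqType) (a b c : seq T) : rdist (a ++ c) (b ++ c) <= size a + size b.
Proof.
rewrite /rdist /lcs_len !rev_cat !size_cat.
by have := lcp_len_cat (rev c) (rev a) (rev b); rewrite size_rev; lia.
Qed.

Section BimachineOutput.
Variables (S : finType) (B : bimachine S).

Definition omega_max :=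
  \max_(t : (LQ B * S * RQ B)%type) size (odflt [::] (omega B t.1.1 t.1.2 t.2)).
Definition lambda_max := \max_(r : RQ B) size (odflt [::] (lambda B r)).
Definition rho_max := \max_(l : LQ B) size (rho B l).

Definition lrunB := lrun (dL B) (l0 B).
Definition rrunB := rrun (dR B) (r0 B).

Definition blocks (z : seq S) (s : seq nat) :=
  foldr (@optcat S) (Some [::]) [seq block B z i | i <- s].

Definition prefix_output z n :=
  optcat (obind (lambda B) (rrunB z)) (blocks z (iota 0 n)).
Definition suffix_output z n :=
  optcat (blocks z (iota n (size z - n))) (omap (rho B) (lrunB z)).

Lemma bsem_split z n : n <= size z ->
  bsem B z = optcat (prefix_output z n) (suffix_output z n).
Proof.
move=> Hn; rewrite /bsem -{1}(subnKC Hn) iotaD add0n.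
by rewrite /blocks map_cat foldr_optcat_cat -!optcatA.
Qed.

Lemma size_block z i o : block B z i = Some o -> size o <= omega_max.
Proof.
rewrite /block; case: (drop i z) => [|a rest] //.
case: (lrun _ _ _) => [l|] //; case: (rrun _ _ _) => [r|] // Ho.
have := leq_bigmax (F := fun t : (LQ B * S * RQ B)%type =>
   size (odflt [::] (omega B t.1.1 t.1.2 t.2))) (l, a, r).
by rewrite /= Ho.
Qed.

Lemma size_blocks z s o : blocks z s = Some o -> size o <= omega_max * size s.
Proof.
elim: s o => [|i s IH] o /=; first by case=> <-.
move/optcat_Some=> [a [b [/size_block Ha /IH Hb ->]]].
by rewrite size_cat mulnS leq_add.
Qed.

Lemma size_prefix_output z n o :
  prefix_output z n = Some o -> size o <= lambda_max + omega_max * n.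
Proof.
move/optcat_Some=> [a [b [Ha /size_blocks Hb ->]]].
rewrite size_iota in Hb; rewrite size_cat leq_add //.
case: (rrunB z) Ha => [r|] //= Ha.
have := leq_bigmax (F := fun r : RQ B => size (odflt [::] (lambda B r))) r.
by rewrite /= Ha.
Qed.

Lemma size_suffix_output z n o :
  suffix_output z n = Some o -> size o <= omega_max * (size z - n) + rho_max.
Proof.
move/optcat_Some=> [a [b [/size_blocks Ha Hb ->]]].
rewrite size_iota in Ha; rewrite size_cat leq_add //.
case: (lrunB z) Hb => [l|] //= [<-].
exact: (leq_bigmax (F := fun l : LQ B => size (rho B l)) l).
Qed.

Lemma block_catr x x' y j : lrunB x = lrunB x' ->
  block B (x ++ y) (size x + j) = block B (x' ++ y) (size x' + j).
Proof.
move=> Hx; rewrite /block !drop_cat !take_cat !ltnNge !leq_addr /= !addKn.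
by rewrite /lrunB in Hx; rewrite !lrun_cat Hx.
Qed.

Lemma block_catl x y y' i : i < size x -> rrunB y = rrunB y' ->
  block B (x ++ y) i = block B (x ++ y') i.
Proof.
move=> Hi Hy; rewrite /block !drop_cat !take_cat Hi.
case E: (drop i x) => [|a rest] /=; first by move: (size_drop i x); rewrite E /=; lia.
by rewrite /rrunB in Hy; rewrite !rrun_cat Hy.
Qed.

Lemma suffix_output_cat x x' y : lrunB x = lrunB x' ->
  suffix_output (x ++ y) (size x) = suffix_output (x' ++ y) (size x').
Proof.
move=> Hx; rewrite /suffix_output !size_cat !addKn /lrunB !lrun_cat.
rewrite /lrunB in Hx; rewrite Hx; congr optcat.
rewrite /blocks -[size x]addn0 -[size x']addn0 !iotaDl -!map_comp.
by congr foldr; apply: eq_map => j /=; exact: block_catr.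
Qed.

Lemma prefix_output_cat x y y' : rrunB y = rrunB y' ->
  prefix_output (x ++ y) (size x) = prefix_output (x ++ y') (size x).
Proof.
move=> Hy; rewrite /prefix_output /rrunB !rrun_cat.
rewrite /rrunB in Hy; rewrite Hy; congr optcat.
rewrite /blocks; congr foldr; apply/eq_in_map => i.
by rewrite mem_iota /= add0n => Hi; apply: block_catl.
Qed.

Hypothesis total : forall u, bsem B u <> None.

Lemma left_equiv_sub_L0 : refines (left_equiv (dL B) (l0 B)) (L0_equiv (bsem B)).
Proof.
move=> u v Huv; have {Huv}Hl := left_equiv_lrun Huv.
split=> [w|]; first by split=> _; apply: total.
exists (lambda_max + omega_max * size u + (lambda_max + omega_max * size v)) => w x y.
rewrite (bsem_split (n := size u)) ?(bsem_split (n := size v)) ?size_cat ?leq_addr //.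
rewrite (suffix_output_cat w Hl) => Hx Hy.
have [a [a' [c [/size_prefix_output Ha /size_prefix_output Ha' -> ->]]]] :=
  optcat_common_suffix Hx Hy.
exact: leq_trans (rdist_catr a a' c) (leq_add Ha Ha').
Qed.

Lemma right_equiv_sub_R0 : refines (right_equiv (dR B) (r0 B)) (R0_equiv (bsem B)).
Proof.
move=> u v Huv; have {Huv}Hr := right_equiv_rrun Huv.
split=> [w|]; first by split=> _; apply: total.
exists (omega_max * size u + rho_max + (omega_max * size v + rho_max)) => w x y.
rewrite (bsem_split (n := size w)) ?(bsem_split (z := w ++ v) (n := size w))
  ?size_cat ?leq_addr //.
rewrite (prefix_output_cat w Hr) => Hx Hy.
have [c [b [b' [/size_suffix_output Hb /size_suffix_output Hb' -> ->]]]] :=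
  optcat_common_prefix Hx Hy.
rewrite !size_cat !addKn in Hb Hb'.
exact: leq_trans (ldist_catl c b b') (leq_add Hb Hb').
Qed.

End BimachineOutput.

Theorem mainTheorem11 (S : finType) (B : bimachine S)
  (Htotal : forall u : seq S, bsem B u <> None) :
  refines (left_equiv (dL B) (l0 B)) (L0_equiv (bsem B)) /\
  refines (right_equiv (dR B) (r0 B)) (R0_equiv (bsem B)).
Proof. by split; [apply: left_equiv_sub_L0 | apply: right_equiv_sub_R0]. Qed.
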